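(* Let $\mathcal{H}_A,\mathcal{H}_B,\mathcal{H}_C$ be finite-dimensional Hilbert spaces. For any strictly positive definite density matrix $\rho_{AB}$ on $\mathcal{H}_A\otimes\mathcal{H}_B$ and any strictly positive definite density matrix $\sigma_{BC}$ on $\mathcal{H}_B\otimes\mathcal{H}_C$, $$\rho_A^{-1}\otimes \sigma_{BC} \;\leq\; \rho_{AB}^{-1}\otimes \sigma_C$$ as operators on $\mathcal{H}_A\otimes\mathcal{H}_B\otimes\mathcal{H}_C$.
   Context: A density matrix is a positive semidefinite operator of trace one. Marginals are partial traces: $\rho_A=\mathrm{Tr}_B\,\rho_{AB}$, $\sigma_C=\mathrm{Tr}_B\,\sigma_{BC}$. The tensor factors are ordered as $\mathcal{H}_A\otimes\mathcal{H}_B\otimes\mathcal{H}_C$ (so $\rho_A^{-1}\otimes\sigma_{BC}$ acts as $\rho_A^{-1}$ on $A$ and $\sigma_{BC}$ on $BC$, and $\rho_{AB}^{-1}\otimes\sigma_C$ acts as $\rho_{AB}^{-1}$ on $AB$ and $\sigma_C$ on $C$). For Hermitian operators, $X\leq Y$ means $Y-X$ is positive semidefinite. *)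

From HB Require Import structures.
From mathcomp Require Import all_boot all_order all_algebra.
From mathcomp Require Import mxtens.
Set Implicit Arguments. Unset Strict Implicit. Unset Printing Implicit Defensive.
Import Order.TTheory GRing.Theory Num.Theory.
Local Open Scope ring_scope.

(* Finite-dimensional Hilbert spaces C^n; operators are n x n matrices over a
   numeric closed field C (instantiated with the complex numbers in the
   statement).  Tensor products use the Kronecker product [tensmx] ( *t ) of
   mathcomp-real-closed, whose index (i,j) on 'I_(m*n) is i*n+j. *)

Section QDefs.
Variable C : numClosedFieldType.

Definition adjmx {m n} (A : 'M[C]_(m, n)) : 'M[C]_(n, m) := (map_mx Num.conj A)^T.

Definition psdmx {n} (X : 'M[C]_n) : Prop :=
  forall v : 'cV[C]_n, 0 <= (adjmx v *m X *m v) 0 0.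

Definition pdmx {n} (X : 'M[C]_n) : Prop :=
  forall v : 'cV[C]_n, v != 0 -> 0 < (adjmx v *m X *m v) 0 0.

Definition density {n} (X : 'M[C]_n) : Prop := psdmx X /\ \tr X = 1.

Definition loewner_le {n} (X Y : 'M[C]_n) : Prop := psdmx (Y - X).

Definition ptrace2 {m n} (X : 'M[C]_(m * n)) : 'M[C]_m :=
  \matrix_(i, j) \sum_(k < n) X (mxtens_index (i, k)) (mxtens_index (j, k)).

Definition ptrace1 {m n} (X : 'M[C]_(m * n)) : 'M[C]_n :=
  \matrix_(i, j) \sum_(k < m) X (mxtens_index (k, i)) (mxtens_index (k, j)).

End QDefs.

From HB Require Import structures.
From mathcomp Require Import all_boot all_order all_algebra.
From mathcomp Require Import mxtens complex.
From mathcomp Require Import reals.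
From mathcomp Require Import ring.
Import Order.TTheory GRing.Theory Num.Theory.
Local Open Scope ring_scope.

(* Factor sigma = W W^* = sum_j w_j w_j^*.  Each side is then a sum over j of
   congruences: for a vector v on ABC,
     <v, rho_A^-1 (x) sigma_BC v>  = sum_j x_j^* rho_A^-1 x_j,
     <v, rho_AB^-1 (x) sigma_C v>  = sum_j sum_k y_jk^* rho_AB^-1 y_jk,
   where x_j contracts BC against w_j and y_jk contracts C against the B = k
   slice of w_j, so that x_j = sum_k E_k^* y_jk with E_k : u |-> u (x) e_k.
   Since rho_A = sum_k E_k^* rho_AB E_k, the termwise inequality is the
   operator Cauchy-Schwarz inequality
     (sum_k E_k^* y_k)^* (sum_k E_k^* rho E_k)^-1 (sum_k E_k^* y_k)
        <= sum_k y_k^* rho^-1 y_k,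
   proved by completing the square. *)

Set Implicit Arguments. Unset Strict Implicit. Unset Printing Implicit Defensive.

Section ComplexMatrices.
Variable C : numClosedFieldType.
Local Notation adj := (@adjmx C _ _).

Lemma entryB m n (A B : 'M[C]_(m, n)) i j : (A - B) i j = A i j - B i j.
Proof. by rewrite !mxE. Qed.

Lemma adjmxE m n (A : 'M[C]_(m,n)) i j : adj A i j = (A j i)^*.
Proof. by rewrite !mxE. Qed.

Lemma adjmxK m n (A : 'M[C]_(m,n)) : adj (adj A) = A.
Proof. by apply/matrixP=> i j; rewrite !adjmxE conjCK. Qed.

Lemma adjmxM m n p (A : 'M[C]_(m,n)) (B : 'M[C]_(n,p)) :
  adj (A *m B) = adj B *m adj A.
Proof.
apply/matrixP=> i j; rewrite adjmxE !mxE rmorph_sum; apply: eq_bigr=> k _.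
by rewrite !adjmxE rmorphM mulrC.
Qed.

Lemma adjmxD m n (A B : 'M[C]_(m,n)) : adj (A + B) = adj A + adj B.
Proof. by apply/matrixP=> i j; rewrite !mxE rmorphD. Qed.

Lemma adjmxB m n (A B : 'M[C]_(m,n)) : adj (A - B) = adj A - adj B.
Proof. by apply/matrixP=> i j; rewrite !mxE rmorphB. Qed.

Lemma adjmxZ m n k (A : 'M[C]_(m,n)) : adj (k *: A) = k^* *: adj A.
Proof. by apply/matrixP=> i j; rewrite !mxE rmorphM. Qed.

Lemma adjmx_sum m n I (r : seq I) (P : pred I) (F : I -> 'M[C]_(m,n)) :
  adj (\sum_(i <- r | P i) F i) = \sum_(i <- r | P i) adj (F i).
Proof.
apply/matrixP=> i j; rewrite adjmxE !summxE rmorph_sum.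
by apply: eq_bigr=> k _; rewrite adjmxE.
Qed.

Lemma adjmx0 m n : adj (0 : 'M[C]_(m,n)) = 0.
Proof. by apply/matrixP=> i j; rewrite !mxE conjC0. Qed.

Lemma adjmx_scalar n k : adj (k%:M : 'M[C]_n) = k^*%:M.
Proof. by apply/matrixP=> i j; rewrite !mxE rmorphMn eq_sym. Qed.

Lemma adjmx1 n : adj (1%:M : 'M[C]_n) = 1%:M.
Proof. by rewrite adjmx_scalar conjC1. Qed.

Lemma adjmx_delta n (i : 'I_n) : adj (delta_mx i 0 : 'cV[C]_n) = delta_mx 0 i.
Proof. by apply/matrixP=> x y; rewrite !mxE rmorph_nat andbC. Qed.

Lemma adjmx_eq0 m n (A : 'M[C]_(m,n)) : (adj A == 0) = (A == 0).
Proof.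
apply/eqP/eqP=> [h|->]; last exact: adjmx0.
by rewrite -[A]adjmxK h adjmx0.
Qed.

Lemma adjmx_col m1 m2 n (A : 'M[C]_(m1, n)) (B : 'M[C]_(m2, n)) :
  adj (col_mx A B) = row_mx (adj A) (adj B).
Proof. by rewrite /adjmx map_col_mx tr_col_mx. Qed.

Lemma adjmx_row m n1 n2 (A : 'M[C]_(m, n1)) (B : 'M[C]_(m, n2)) :
  adj (row_mx A B) = col_mx (adj A) (adj B).
Proof. by rewrite /adjmx map_row_mx tr_row_mx. Qed.

Lemma delta_qf n (X : 'M[C]_n) i j :
  (delta_mx 0 i : 'rV[C]_n) *m X *m (delta_mx j 0 : 'cV[C]_n) = (X i j)%:M.
Proof.
by apply/matrixP=> x y; rewrite (ord1 x) (ord1 y) -rowE -colE !mxE.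
Qed.

Lemma qf_pair n (X : 'M[C]_n) i j (l : C)
  (v : 'cV[C]_n := delta_mx i 0 + l *: delta_mx j 0) :
  (adj v *m X *m v) 0 0 = X i i + l * X i j + l^* * X j i + l^* * l * X j j.
Proof.
rewrite /v adjmxD adjmxZ !adjmx_delta.
by rewrite !(mulmxDl, mulmxDr) -!scalemxAl -!scalemxAr !delta_qf !mxE /=; ring.
Qed.

(* Over C, a positive semidefinite matrix is Hermitian: polarizing the real
   quadratic form at e_i + e_j and e_i + 'i e_j recovers X j i = (X i j)^*. *)
Lemma psd_herm n (X : 'M[C]_n) : psdmx X -> adj X = X.
Proof.
move=> psdX; apply/matrixP=> i j; rewrite adjmxE.
have real_pair l : (X i i + l * X i j + l^* * X j i + l^* * l * X j j)^* =
    X i i + l * X i j + l^* * X j i + l^* * l * X j j.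
  by rewrite -qf_pair geC0_conj.
have real_diag k : (X k k)^* = X k k.
  by have := geC0_conj (psdX (delta_mx k 0)); rewrite adjmx_delta delta_qf mxE.
have := real_pair 1; have := real_pair 'i.
rewrite !rmorphD !rmorphM /= !conjCK conjC1 conjCi !real_diag.
move=> /eqP; rewrite -subr_eq0 => /eqP h_i /eqP; rewrite -subr_eq0 => /eqP h1.
have sum_eq : (X i j)^* + (X j i)^* - X i j - X j i = 0 by rewrite -h1; ring.
have dif_eq : (X j i)^* - (X i j)^* - X i j + X j i = 0.
  have : 'i * ((X j i)^* - (X i j)^* - X i j + X j i) = 0 by rewrite -h_i; ring.
  by move/eqP; rewrite mulf_eq0 (negbTE (neq0Ci C)) => /eqP.
apply: (@mulIf _ 2); first by rewrite pnatr_eq0.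
apply/eqP; rewrite -subr_eq0; apply/eqP.
transitivity ((X i j)^* + (X j i)^* - X i j - X j i +
  ((X j i)^* - (X i j)^* - X i j + X j i)); first by ring.
by rewrite sum_eq dif_eq addr0.
Qed.

Lemma pd_psd n (X : 'M[C]_n) : pdmx X -> psdmx X.
Proof.
move=> pdX v; have [->|v0] := eqVneq v 0; last exact: ltW (pdX v v0).
by rewrite mulmx0 mxE.
Qed.

Lemma pd_unit n (X : 'M[C]_n) : pdmx X -> X \in unitmx.
Proof.
move=> pdX; rewrite unitmxE unitfE; apply/negP => /det0P [v v0 Xv].
have := pdX (adj v); rewrite adjmx_eq0 => /(_ v0).
by rewrite adjmxK Xv mul0mx mxE ltxx.
Qed.

Lemma herm_inv n (X : 'M[C]_n) : X \in unitmx -> adj X = X ->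
  adj (invmx X) = invmx X.
Proof.
move=> uX hX; have h : adj (invmx X) *m X = 1%:M.
  by rewrite -{2}hX -adjmxM mulmxV // adjmx1.
by rewrite -[adj _]mulmx1 -(mulmxV uX) mulmxA h mul1mx.
Qed.

(* The inverse of a positive definite matrix is positive semidefinite:
   its quadratic form at u is that of X at X^-1 u. *)
Lemma pd_inv_psd n (X : 'M[C]_n) : pdmx X -> psdmx (invmx X).
Proof.
move=> pdX u; have uX := pd_unit pdX.
have hXi := herm_inv uX (psd_herm (pd_psd pdX)).
have -> : adj u *m invmx X *m u = adj (invmx X *m u) *m X *m (invmx X *m u).
  by rewrite adjmxM hXi !mulmxA -(mulmxA _ (invmx X) X) mulVmx // mulmx1.
exact: pd_psd.
Qed.

Lemma psd_void n (X : 'M[C]_n) : ('I_n -> False) -> psdmx X.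
Proof.
move=> void v; have -> : v = 0 by apply/matrixP=> i; case: (void i).
by rewrite mulmx0 mxE.
Qed.

Lemma qf_block n (a : 'M[C]_1) (c : 'M[C]_(1, n)) (b : 'M[C]_(n, 1)) (D : 'M[C]_n)
  (u : 'cV[C]_1) (v : 'cV[C]_n) :
  adj (col_mx u v) *m block_mx a c b D *m col_mx u v =
  adj u *m a *m u + adj u *m c *m v + (adj v *m b *m u + adj v *m D *m v).
Proof. by rewrite adjmx_col mul_row_block mul_row_col !mulmxDl addrACA. Qed.

Lemma schur_pd n (al : C) (c : 'M[C]_(1, n)) (D : 'M[C]_n) :
  pdmx (block_mx al%:M c (adj c) D) ->
  0 < al /\ pdmx (D - al^-1 *: (adj c *m c)).
Proof.
move=> pdX; have qfX (u : 'cV[C]_1) (v : 'cV[C]_n) : col_mx u v != 0 -> 0 <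
    (adj u *m al%:M *m u + adj u *m c *m v + (adj v *m adj c *m u + adj v *m D *m v)) 0 0.
  by rewrite -qf_block; apply: pdX.
have al_gt0 : 0 < al.
  have := qfX 1%:M 0; rewrite adjmx1 adjmx0.
  rewrite !(mulmx0, mul0mx, mulmx1, mul1mx, addr0) mxE /= mulr1n; apply.
  by rewrite col_mx_eq0 negb_and -scalemx1 scalemx_eq0 oner_eq0 matrix_nonzero1.
split=> // v v0.
(* At u = - al^-1 c v the form of X is the form of the Schur complement at v. *)
have := qfX (- al^-1 *: (c *m v)) v; rewrite col_mx_eq0 (negbTE v0) andbF.
move=> /(_ isT) /lt_le_trans; apply; rewrite le_eqVlt; apply/orP; left.
have cali : al^-1^* = al^-1 by apply: geC0_conj; rewrite invr_ge0 ltW.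
rewrite adjmxZ adjmxM rmorphN /= cali mulmxBr mulmxBl.
rewrite ?(mul_mx_scalar, =^~scalemxAl, =^~scalemxAr, scalerA, mulmxA) !mxE.
by apply/eqP; field; rewrite gt_eqF.
Qed.

Lemma block_factor n (al : C) (c : 'M[C]_(1, n)) (W' : 'M[C]_n)
  (sa : C := sqrtC al)
  (W : 'M[C]_(1 + n) := row_mx (col_mx sa%:M (sa^-1 *: adj c)) (col_mx 0 W')) :
  0 < al ->
  block_mx al%:M c (adj c) (W' *m adj W' + al^-1 *: (adj c *m c)) = W *m adj W.
Proof.
move=> al_gt0; have sa0 : sa != 0 by rewrite sqrtC_eq0 gt_eqF.
have csa : sa^* = sa by apply: geC0_conj; rewrite sqrtC_ge0 ltW.
have sa2 : sa * sa = al by rewrite -expr2 sqrtCK.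
rewrite /W adjmx_row !adjmx_col mul_row_col !mul_col_row add_block_mx.
rewrite adjmx_scalar adjmxZ fmorphV /= csa adjmxK !adjmx0.
rewrite !(mulmx0, mul0mx, addr0, add0r); congr block_mx.
- by rewrite -scalar_mxM sa2.
- by rewrite mul_scalar_mx scalerA mulfV // scale1r.
- by rewrite mul_mx_scalar scalerA mulfV // scale1r.
- by rewrite -scalemxAl -scalemxAr scalerA -invfM sa2 addrC.
Qed.

Lemma pd_factor n (X : 'M[C]_n) : pdmx X -> exists W : 'M[C]_n, X = W *m adj W.
Proof.
elim: n X => [|n IH] X pdX; first by exists 0; apply/matrixP=> [[]].
have hX := psd_herm (pd_psd pdX).
pose Y : 'M[C]_(1 + n) := X.
have [hb el] : dlsubmx Y = adj (ursubmx Y) /\ ulsubmx Y = (ulsubmx Y 0 0)%:M.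
  split; last exact: mx11_scalar.
  by rewrite -{1}[Y]hX; apply/matrixP=> i j; rewrite !mxE.
have eX : X = block_mx (ulsubmx Y 0 0)%:M (ursubmx Y) (adj (ursubmx Y))
  (drsubmx Y) by rewrite -hb -el submxK.
move: pdX; rewrite eX => /schur_pd [al_gt0 /IH [W' eW']].
exists (row_mx (col_mx (sqrtC (ulsubmx Y 0 0))%:M
  ((sqrtC (ulsubmx Y 0 0))^-1 *: adj (ursubmx Y))) (col_mx 0 W')).
by rewrite -block_factor // -eW' subrK.
Qed.

(* Completing the square: with R the inverse of M = sum_i K_i^* rho K_i and
   x = sum_i K_i^* y_i, shifting each y_i by z_i = rho K_i R x lowers
   sum_i y_i^* rho^-1 y_i by exactly x^* R x. *)
Lemma sum_qf_shift p q (I : finType) (K : I -> 'M[C]_(q, p)) (rho P : 'M[C]_q)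
  (R : 'M[C]_p) (y : I -> 'cV[C]_q) (x : 'cV[C]_p := \sum_i adj (K i) *m y i)
  (z : I -> 'cV[C]_q := fun i => rho *m K i *m (R *m x)) :
  P *m rho = 1%:M -> rho *m P = 1%:M -> adj rho = rho -> adj R = R ->
  R *m (\sum_i adj (K i) *m rho *m K i) = 1%:M ->
  \sum_i adj (y i - z i) *m P *m (y i - z i) =
  \sum_i adj (y i) *m P *m y i - adj x *m R *m x.
Proof.
move=> Pr rP hr hR RM; set s := R *m x.
have cross_l i : adj (y i) *m P *m z i = adj (adj (K i) *m y i) *m s.
  by rewrite /z !mulmxA -(mulmxA _ P) Pr mulmx1 adjmxM adjmxK.
have cross_r i : adj (z i) *m P *m y i = adj s *m (adj (K i) *m y i).
  by rewrite /z !adjmxM hr !mulmxA -(mulmxA _ rho) rP mulmx1.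
have square i : adj (z i) *m P *m z i = adj s *m (adj (K i) *m rho *m K i) *m s.
  by rewrite /z !adjmxM hr !mulmxA -(mulmxA _ rho P) rP mulmx1 -!mulmxA.
under eq_bigr => i _ do
  rewrite adjmxB !mulmxBl !mulmxBr cross_l cross_r square.
rewrite !sumrB -!mulmx_sumr -!mulmx_suml -adjmx_sum -/x -mulmx_sumr.
have -> : adj s *m x = adj x *m R *m x by rewrite /s adjmxM hR.
have -> : adj s *m (\sum_i adj (K i) *m rho *m K i) *m s = adj x *m R *m x.
  by rewrite /s adjmxM hR -!mulmxA (mulmxA R) RM mul1mx.
by rewrite mulmxA subrr subr0.
Qed.

Lemma congr_sum_inv_le p q (I : finType) (K : I -> 'M[C]_(q, p))
  (rho : 'M[C]_q) (y : I -> 'cV[C]_q)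
  (M : 'M[C]_p := \sum_i adj (K i) *m rho *m K i)
  (x : 'cV[C]_p := \sum_i adj (K i) *m y i) :
  pdmx rho -> M \in unitmx ->
  (adj x *m invmx M *m x) 0 0 <= (\sum_i adj (y i) *m invmx rho *m y i) 0 0.
Proof.
move=> pd_rho uM; have u_rho := pd_unit pd_rho.
have h_rho := psd_herm (pd_psd pd_rho).
have hM : adj M = M.
  by rewrite adjmx_sum; apply: eq_bigr => i _; rewrite !adjmxM adjmxK h_rho mulmxA.
have := sum_qf_shift y (mulVmx u_rho) (mulmxV u_rho) h_rho (herm_inv uM hM)
  (mulVmx uM).
move=> /(congr1 (fun A : 'M_1 => A 0 0)); rewrite entryB -/x -/M.
rewrite -subr_ge0 => <-; rewrite summxE.
by apply: sumr_ge0 => i _; exact: pd_inv_psd.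
Qed.

Lemma qf_congr_sum p q (I : finType) (K : I -> 'M[C]_(q, p)) (X : 'M[C]_q)
  (v : 'cV[C]_p) :
  adj v *m (\sum_i adj (K i) *m X *m K i) *m v =
  \sum_i adj (K i *m v) *m X *m (K i *m v).
Proof.
rewrite mulmx_sumr mulmx_suml; apply: eq_bigr => i _.
by rewrite adjmxM !mulmxA.
Qed.

Lemma sum_delta q (k : 'I_q) (F : 'I_q -> C) :
  \sum_m ((m == k)%:R * F m) = F k.
Proof.
rewrite (bigD1 k) //= eqxx mul1r big1 ?addr0 // => m /negbTE ->.
by rewrite mul0r.
Qed.

(* The weighted selection matrix whose i-th column is g i times the basis
   vector e_(f i); congruences by such matrices express Kronecker products
   and partial traces. *)
Definition selmx q p (f : 'I_p -> 'I_q) (g : 'I_p -> C) : 'M[C]_(q, p) :=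
  \matrix_(m, i) ((m == f i)%:R * g i).

Lemma selmx_mulE q p r (f : 'I_p -> 'I_q) g (X : 'M[C]_(q, r)) i j :
  (adj (selmx f g) *m X) i j = (g i)^* * X (f i) j.
Proof.
rewrite mxE (eq_bigr (fun m => (m == f i)%:R * ((g i)^* * X m j))) ?sum_delta //.
by move=> m _; rewrite adjmxE mxE rmorphM /= conjC_nat mulrA.
Qed.

Lemma mul_selmxE q p r (f : 'I_p -> 'I_q) g (X : 'M[C]_(r, q)) i j :
  (X *m selmx f g) i j = X i (f j) * g j.
Proof.
rewrite mxE (eq_bigr (fun m => (m == f j)%:R * (X i m * g j))) ?sum_delta //.
by move=> m _; rewrite mxE mulrCA mulrA.
Qed.

Lemma selmx_congrE q p (f : 'I_p -> 'I_q) g (X : 'M[C]_q) i j :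
  (adj (selmx f g) *m X *m selmx f g) i j = (g i)^* * X (f i) (f j) * g j.
Proof. by rewrite mul_selmxE selmx_mulE. Qed.

Local Notation ix := mxtens_index.
Local Notation unix := mxtens_unindex.

Lemma ix_eq m n (i i' : 'I_m) (j j' : 'I_n) :
  (ix (i, j) == ix (i', j')) = (i == i') && (j == j').
Proof. by rewrite (can_eq (@mxtens_indexK m n)) xpair_eqE. Qed.

Section Tripartite.
Variables a b c : nat.

(* embed j : H_A -> H_A (x) H_B is the isometry u |-> u (x) e_j. *)
Definition embed (j : 'I_b) : 'M[C]_(a * b, a) :=
  selmx (fun i : 'I_a => ix (i, j)) (fun _ => 1).

Lemma ptrace2_congr (X : 'M[C]_(a * b)) :
  ptrace2 X = \sum_j adj (embed j) *m X *m embed j.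
Proof.
apply/matrixP=> i i'; rewrite mxE summxE; apply: eq_bigr=> j _.
by rewrite selmx_congrE conjC1 mul1r mulr1.
Qed.

(* The marginal of a positive definite matrix is positive definite: the
   term of any fixed j already contributes positively. *)
Lemma ptrace2_pd (X : 'M[C]_(a * b)) : (0 < b)%N -> pdmx X -> pdmx (ptrace2 X).
Proof.
move=> b_gt0 pdX v v0; rewrite ptrace2_congr qf_congr_sum summxE.
have [k vk] : exists k, v k 0 != 0.
  apply/existsP; apply: contraR v0; rewrite negb_exists => /forallP v_eq0.
  by apply/eqP/matrixP=> k l; rewrite (ord1 l) mxE; apply/eqP/negPn/v_eq0.
pose j0 : 'I_b := Ordinal b_gt0.
rewrite (bigD1 j0) //= -[X in X < _]addr0; apply: ltr_leD; last first.
  by apply: sumr_ge0 => j _; apply: pd_psd.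
apply: pdX; apply/negP=> /eqP /matrixP /(_ (ix (k, j0)) 0).
rewrite !mxE (eq_bigr (fun i => (i == k)%:R * v i 0)) ?sum_delta.
  by move/eqP; rewrite (negbTE vk).
by move=> i _; rewrite mxE ix_eq eqxx andbT eq_sym mulr1.
Qed.

Lemma cast_ix (i : 'I_a) (j : 'I_b) (k : 'I_c) :
  cast_ord (esym (mulnA a b c)) (ix (ix (i, j), k)) = ix (i, ix (j, k)).
Proof. by apply: val_inj => /=; rewrite mulnDl -mulnA addnA. Qed.

(* W is a factor of sigma = W W^* = sum_j w_j w_j^*.  contrBC j contracts
   the BC factor of H_ABC against w_j, i.e. it is I_A (x) w_j^*, and contrC j k
   contracts the C factor against the B = k slice of w_j. *)
Variable W : 'M[C]_(b * c).

Definition contrBC (j : 'I_(b * c)) : 'M[C]_(a, a * b * c) :=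
  selmx (fun i => (unix (unix i).1).1)
        (fun i => (W (ix ((unix (unix i).1).2, (unix i).2)) j)^*).

Definition contrC (j : 'I_(b * c)) (k : 'I_b) : 'M[C]_(a * b, a * b * c) :=
  selmx (fun i => (unix i).1) (fun i => (W (ix (k, (unix i).2)) j)^*).

Lemma sum_embed_contrC j : \sum_k adj (embed k) *m contrC j k = contrBC j.
Proof.
apply/matrixP => al i; rewrite summxE.
case: (mxtens_indexP i) => m g; case: (mxtens_indexP m) => al0 be0.
rewrite mxE !mxtens_indexK /=.
rewrite (eq_bigr (fun k => (k == be0)%:R *
  ((al == al0)%:R * (W (ix (k, g)) j)^*))) ?sum_delta // => k _.
rewrite selmx_mulE conjC1 mul1r mxE !mxtens_indexK /= ix_eq.
by rewrite -mulnb natrM mulrCA mulrA.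
Qed.

Lemma tensmx_left_congr (R : 'M[C]_a) :
  castmx (mulnA a b c, mulnA a b c) (R *t (W *m adj W)) =
  \sum_j adj (contrBC j) *m R *m contrBC j.
Proof.
apply/matrixP=> i i'; rewrite summxE castmxE /=.
case: (mxtens_indexP i) => m g; case: (mxtens_indexP m) => al be.
case: (mxtens_indexP i') => m' g'; case: (mxtens_indexP m') => al' be'.
rewrite !cast_ix tensmxE mxE mulr_sumr; apply: eq_bigr => j _.
rewrite selmx_congrE !mxtens_indexK /= adjmxE conjCK.
by rewrite mulrCA mulrA.
Qed.

Lemma tensmx_right_congr (P : 'M[C]_(a * b)) :
  P *t ptrace1 (W *m adj W) = \sum_j \sum_k adj (contrC j k) *m P *m contrC j k.
Proof.
apply/matrixP=> i i'; rewrite summxE.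
under eq_bigr => j _ do rewrite summxE.
case: (mxtens_indexP i) => m g; case: (mxtens_indexP i') => m' g'.
rewrite tensmxE mxE exchange_big mulr_sumr; apply: eq_bigr => k _.
rewrite mxE mulr_sumr; apply: eq_bigr => j _.
rewrite selmx_congrE !mxtens_indexK /= adjmxE conjCK.
by rewrite mulrCA mulrA.
Qed.

End Tripartite.

Theorem marginal_inv_tensor_le a b c (rho : 'M[C]_(a * b)) (sigma : 'M[C]_(b * c)) :
  pdmx rho -> pdmx sigma ->
  loewner_le
    (castmx (mulnA a b c, mulnA a b c) (invmx (ptrace2 rho) *t sigma))
    (invmx rho *t ptrace1 sigma).
Proof.
move=> pd_rho pd_sigma; have [b0 | b_gt0] := posnP b.
  by apply: psd_void; case=> i; rewrite b0 muln0 mul0n.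
have [W ->] := pd_factor pd_sigma.
move=> v; rewrite tensmx_left_congr tensmx_right_congr mulmxBr mulmxBl.
rewrite qf_congr_sum mulmx_sumr mulmx_suml -sumrB summxE.
apply: sumr_ge0 => j _; rewrite entryB subr_ge0.
rewrite qf_congr_sum -sum_embed_contrC mulmx_suml.
under eq_bigr do rewrite -mulmxA.
have := pd_unit (ptrace2_pd b_gt0 pd_rho); rewrite ptrace2_congr.
exact: congr_sum_inv_le.
Qed.

End ComplexMatrices.

Local Open Scope complex_scope.

Theorem lemma1 (R : realType) (a b c : nat)
  (rhoAB : 'M[R[i]]_(a * b)) (sigmaBC : 'M[R[i]]_(b * c)) :
  density rhoAB -> pdmx rhoAB ->
  density sigmaBC -> pdmx sigmaBC ->
  loewner_le
    (castmx (mulnA a b c, mulnA a b c)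
       (invmx (ptrace2 rhoAB) *t sigmaBC))
    (invmx rhoAB *t ptrace1 sigmaBC).
Proof. by move=> _ pd_rho _ pd_sigma; exact: marginal_inv_tensor_le. Qed.
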